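(* Let $m>2\left(\left(2C+\tfrac14\right)^{1/4}+\sqrt2\right)^2$ be an integer and $n=\lceil\log_2(m-3)\rceil$. Then the $m$-gonal form $$P_m(x_1)+2P_m(x_2)+4P_m(x_3)+\cdots+2^{n}P_m(x_{n+1})$$ is universal.
   Context: For an integer $m\ge 3$ and $x\in\mathbb Z$ put $P_m(x)=\frac{m-2}{2}x^2-\frac{m-4}{2}x$. An $m$-gonal form $\sum_i a_iP_m(x_i)$ (positive integer coefficients, integer variables) is universal if for every positive integer $N$ there are integers $x_i$ with $\sum_i a_iP_m(x_i)=N$. Standing assumption: $C$ is a fixed absolute constant such that for every $m\ge3$, every $m$-gonal form that represents every positive integer in $[1,C(m-2)]$ is universal. *)

From Stdlib Require Import ZArith Reals List.
Open Scope Z_scope.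

(* P_m(x) = ((m-2)/2) x^2 - ((m-4)/2) x ; the numerator is always even. *)
Definition Pm (m x : Z) : Z := ((m - 2) * x ^ 2 - (m - 4) * x) / 2.

Definition form_value (m : Z) (a xs : list Z) : Z :=
  fold_right Z.add 0 (map (fun p => fst p * Pm m (snd p)) (combine a xs)).

Definition represents (m : Z) (a : list Z) (N : Z) : Prop :=
  exists xs : list Z, length xs = length a /\ form_value m a xs = N.

Definition universal (m : Z) (a : list Z) : Prop :=
  forall N : Z, 0 < N -> represents m a N.

Definition C_property (C : R) : Prop :=
  forall (m : Z) (a : list Z), 3 <= m -> Forall (fun c => 0 < c) a ->
    (forall N : Z, 1 <= N -> (IZR N <= C * IZR (m - 2))%R -> represents m a N) ->
    universal m a.

Definition pow2_coeffs (n : nat) : list Z :=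
  map (fun i => 2 ^ Z.of_nat i) (seq 0 (S n)).

From Stdlib Require Import ZArith Reals List Lia Lra Psatz Bool.
Import ListNotations.
Open Scope Z_scope.

(** With T y = y(y+1)/2 one has P_m(x) = (m-2) T(x-1) + x, so a value of the
    form is (m-2) Q + L, where Q = sum 2^i T(x_i - 1) and L = sum 2^i x_i.
    Writing x_i = y_i + 1 or x_i = -y_i (y_i >= 0) leaves T(x_i - 1) = T y_i
    unchanged, and the free signs let L sweep a whole window of values
    ([sign_choice]).  Hence N = (m-2) q + B (0 <= B <= m-3) is represented
    once q = T(x0 - 1) + 2 (T z1 + 2 T z2 + 4 k2) with z1 + 2 z2 + 4 k2 small
    (k2 is spread over the remaining variables through its binary digits);
    such data is called a witness ([witness_window]).  If B is too small for
    the witnesses of q, one uses q - 1 and B + m - 2 instead.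

    By the standing assumption only N <= C (m-2) matter; then T a <= C for
    the triangular root a of q, and the hypothesis on m becomes the integer
    bound m >= Mbound a = 2a + 6 + sqrt(32a + 16) ([Mbound_from_C]).
    Under this bound witnesses exist:
    - for q < T 134 = 9045, among eight explicit candidates per q; this is
      checked by computation ([certified_range], [certified_represents]);
    - for larger q, by the estimate z1 + 2 z2 + 4 k2 <= 8 sqrt a + 5
      ([tail_bound], [large_represents]). *)

(** * Triangular numbers *)

Definition T (y : Z) : Z := y * (y + 1) / 2.

Lemma T_double y : 2 * T y = y * (y + 1).
Proof.
  unfold T. destruct (Z.Even_or_Odd y) as [[k ->] | [k ->]].
  - replace (2 * k * (2 * k + 1)) with (k * (2 * k + 1) * 2) by ring.
    rewrite Z.div_mul by lia. ring.
  - replace ((2 * k + 1) * (2 * k + 1 + 1)) with ((2 * k + 1) * (k + 1) * 2) by ring.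
    rewrite Z.div_mul by lia. ring.
Qed.

(* T is symmetric about -1/2: the two signs of x give the same T(x - 1). *)
Lemma T_reflect y : T (- y - 1) = T y.
Proof. unfold T. f_equal. ring. Qed.

Lemma T_mono x y : 0 <= x <= y -> T x <= T y.
Proof. intros. pose proof (T_double x). pose proof (T_double y). nia. Qed.

Lemma Pm_triangular m x : Pm m x = (m - 2) * T (x - 1) + x.
Proof.
  unfold Pm. pose proof (T_double (x - 1)). rewrite Z.pow_2_r.
  replace ((m - 2) * (x * x) - (m - 4) * x) with (((m - 2) * T (x - 1) + x) * 2) by nia.
  rewrite Z.div_mul; lia.
Qed.

Definition tri_root (q : Z) : Z := (Z.sqrt (8 * q + 1) - 1) / 2.

Lemma tri_root_spec q :
  0 <= q -> 0 <= tri_root q /\ T (tri_root q) <= q < T (tri_root q + 1).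
Proof.
  intros Hq. unfold tri_root.
  destruct (Z.sqrt_spec (8 * q + 1)) as [Hs1 Hs2]; [lia|].
  set (s := Z.sqrt (8 * q + 1)) in *.
  assert (Hs : 1 <= s) by nia.
  set (a := (s - 1) / 2).
  assert (Ha : s = 2 * a + 1 \/ s = 2 * a + 2) by (unfold a; Z.div_mod_to_equations; lia).
  pose proof (T_double a). pose proof (T_double (a + 1)).
  split; [unfold a; Z.div_mod_to_equations; lia|]. nia.
Qed.

(* Greedy splitting k = T z + 2 k1: z is the triangular root of k, lowered
   by at most 2 to fix the parity of k - T z. *)
Definition split_tri (k : Z) : Z * Z :=
  let b := tri_root k in
  let z := if (k - T b) mod 2 =? 0 then b
           else if (k - T (b - 1)) mod 2 =? 0 then b - 1 else b - 2 in
  (z, (k - T z) / 2).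

Lemma split_tri_spec k :
  0 <= k -> let (z, k1) := split_tri k in
  0 <= z /\ 0 <= k1 /\ k = T z + 2 * k1 /\ z * z <= 2 * k /\ 2 * k1 <= 3 * z + 5.
Proof.
  intros Hk. destruct (tri_root_spec k Hk) as [Hb0 [Hb1 Hb2]].
  unfold split_tri. set (b := tri_root k) in *.
  pose proof (T_double b). pose proof (T_double (b + 1)).
  pose proof (T_double (b - 1)). pose proof (T_double (b - 2)).
  assert (T 0 = 0) by reflexivity.
  destruct (Z.eqb_spec ((k - T b) mod 2) 0);
    [|destruct (Z.eqb_spec ((k - T (b - 1)) mod 2) 0)];
    Z.div_mod_to_equations; nia.
Qed.

(** * Values of the form with coefficients 1, 2, ..., 2^n *)

Fixpoint wsum (f : Z -> Z) (l : list Z) : Z :=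
  match l with nil => 0 | y :: r => f y + 2 * wsum f r end.

Lemma form_value_pow2 m xs s :
  form_value m (map (fun i => 2 ^ Z.of_nat i) (seq s (length xs))) xs
  = 2 ^ Z.of_nat s * wsum (Pm m) xs.
Proof.
  revert s; induction xs as [|x r IH]; intro s; unfold form_value in *;
    cbn [length seq map combine fold_right wsum fst snd].
  - ring.
  - rewrite IH, Nat2Z.inj_succ, Z.pow_succ_r by lia. ring.
Qed.

Lemma represents_pow2 m n N xs :
  length xs = S n -> wsum (Pm m) xs = N -> represents m (pow2_coeffs n) N.
Proof.
  intros Hl HN. exists xs. unfold pow2_coeffs. split.
  - now rewrite length_map, length_seq.
  - rewrite <- Hl, form_value_pow2. rewrite Z.mul_1_l. exact HN.
Qed.

(* Choosing x_i in {y_i + 1, -y_i} keeps the triangular part and realises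
   every linear part V in a window of width about 2^(length ys). *)
Lemma sign_choice m ys V :
  Forall (fun y => 0 <= y) ys ->
  wsum (fun y => y) ys <= V <= 2 ^ Z.of_nat (length ys) - 1 - wsum (fun y => y) ys ->
  exists xs, length xs = length ys /\ wsum (Pm m) xs = (m - 2) * wsum T ys + V.
Proof.
  revert V; induction ys as [|y r IH]; intros V Hnn HV.
  - exists nil. cbn in *. split; [reflexivity | lia].
  - inversion Hnn as [|? ? Hy Hr]; subst.
    cbn [length wsum] in *. rewrite Nat2Z.inj_succ, Z.pow_succ_r in HV by lia.
    destruct (Z.Even_or_Odd (V - y - 1)) as [[w Hw] | [w Hw]].
    + destruct (IH w Hr) as [xs [Hl Hs]]; [lia|].
      exists ((y + 1) :: xs). cbn [length wsum]. split; [lia|].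
      rewrite Hs, Pm_triangular. replace (y + 1 - 1) with y by ring.
      replace V with (y + 1 + 2 * w) by lia. ring.
    + destruct (IH (w + y + 1) Hr) as [xs [Hl Hs]]; [lia|].
      exists (- y :: xs). cbn [length wsum]. split; [lia|].
      rewrite Hs, Pm_triangular, T_reflect.
      replace V with (y + 2 + 2 * w) by lia. ring.
Qed.

(* Binary digits of k; since T 0 = 0 and T 1 = 1 they carry k both as a
   triangular and as a linear weighted sum. *)
Fixpoint bits (len : nat) (k : Z) : list Z :=
  match len with O => nil | S l => k mod 2 :: bits l (k / 2) end.

Lemma bits_spec len k :
  0 <= k < 2 ^ Z.of_nat len ->
  length (bits len k) = len /\ wsum T (bits len k) = k /\
  wsum (fun y => y) (bits len k) = k /\ Forall (fun y => 0 <= y) (bits len k).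
Proof.
  revert k; induction len as [|len IH]; intros k Hk.
  - cbn in *. repeat split; auto; lia.
  - rewrite Nat2Z.inj_succ, Z.pow_succ_r in Hk by lia.
    destruct (IH (k / 2)) as [Hl [HT [HY Hnn]]]; [Z.div_mod_to_equations; lia|].
    assert (Hd : T (k mod 2) = k mod 2).
    { assert (k mod 2 = 0 \/ k mod 2 = 1) as [-> | ->] by (Z.div_mod_to_equations; lia);
        reflexivity. }
    cbn [bits length wsum]. rewrite Hl, HT, HY, Hd.
    repeat split; try (Z.div_mod_to_equations; lia).
    constructor; [Z.div_mod_to_equations; lia | exact Hnn].
Qed.

(** * Witnesses *)

(* A witness (x0, z1, z2, k2) for q: q = T(x0 - 1) + 2 (T z1 + 2 T z2 + 4 k2);
   the first variable is x0, the next two are +-z1, +-z2 and the rest hold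
   the binary digits of k2, so that every B = x0 + 2V with V in the window
   below is reached. *)
Lemma witness_represents m n q B x0 z1 z2 k2 V :
  (2 <= n)%nat -> 0 <= z1 -> 0 <= z2 -> 0 <= k2 -> 4 * k2 < 2 ^ Z.of_nat n ->
  T (x0 - 1) + 2 * (T z1 + 2 * T z2 + 4 * k2) = q -> B = x0 + 2 * V ->
  z1 + 2 * z2 + 4 * k2 <= V <= 2 ^ Z.of_nat n - 1 - (z1 + 2 * z2 + 4 * k2) ->
  represents m (pow2_coeffs n) ((m - 2) * q + B).
Proof.
  intros Hn Hz1 Hz2 Hk2 Hk2n Hq HB HV.
  assert (Hpow : 2 ^ Z.of_nat n = 4 * 2 ^ Z.of_nat (n - 2)).
  { replace (Z.of_nat n) with (Z.of_nat (n - 2) + 2) by lia.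
    rewrite Z.pow_add_r by lia. ring. }
  destruct (bits_spec (n - 2) k2) as [Hbl [HbT [HbY Hbnn]]]; [lia|].
  set (ys := z1 :: z2 :: bits (n - 2) k2).
  assert (Hlen : length ys = n) by (cbn; lia).
  destruct (sign_choice m ys V) as [xs [Hl Hs]].
  - constructor; [exact Hz1 | constructor; [exact Hz2 | exact Hbnn]].
  - rewrite Hlen. cbn [ys wsum]. rewrite HbY. lia.
  - apply (represents_pow2 m n _ (x0 :: xs)); [cbn; lia|].
    cbn [wsum]. rewrite Hs, Pm_triangular. cbn [ys wsum]. rewrite HbT.
    subst q B. ring.
Qed.

(** * Small q: a certified finite search *)

Definition witness := (Z * Z * Z * Z)%type.

Definition wx0 (w : witness) : Z := let '(x0, _, _, _) := w in x0.
Definition wk2 (w : witness) : Z := let '(_, _, _, k2) := w in k2.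
Definition wY (w : witness) : Z := let '(_, z1, z2, k2) := w in z1 + 2 * z2 + 4 * k2.
Definition wvalid (q : Z) (w : witness) : bool :=
  let '(x0, z1, z2, k2) := w in
  (0 <=? z1) && (0 <=? z2) && (0 <=? k2) &&
  (T (x0 - 1) + 2 * (T z1 + 2 * T z2 + 4 * k2) =? q).
(* w serves exactly the B with wlow w <= B and B + wup w <= 2 m - 3 *)
Definition wlow (w : witness) : Z := 2 * wY w + wx0 w.
Definition wup (w : witness) : Z := 2 * wY w - wx0 w + 5.

(* The lower bound on m guaranteed by the hypothesis, for q with root a. *)
Definition Mbound (a : Z) : Z := 2 * a + 6 + Z.sqrt (32 * a + 16).

Definition candidates (q : Z) : list witness :=
  flat_map (fun i =>
    let y0 := tri_root q - i in
    let '(z1, k1) := split_tri ((q - T y0) / 2) in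
    let '(z2, k2) := split_tri k1 in
    [(- y0, z1, z2, k2); (y0 + 1, z1, z2, k2)]) [0; 1; 2; 3].

(* Usability of a witness, given only m >= M: directly for B <= m - 3 of
   parity p, or for the shifted value B + m - 2 of parity p. *)
Definition direct_ok (q M p : Z) (w : witness) : bool :=
  wvalid q w && (wx0 w mod 2 =? p) && (wup w <=? M) && (4 * wk2 w + 3 <? M).
Definition shifted_ok (q M p : Z) (w : witness) : bool :=
  wvalid q w && (wx0 w mod 2 =? p) && (wlow w <=? M - 2) && (4 * wk2 w + 3 <? M).

(* For each parity p of B there is a witness d for q serving all B >= wlow d;
   unless d already serves every B of parity p, for each parity p' of
   B + m - 2 some witness s for q - 1 (among [prevs]) serves the remaining
   B < wlow d. *)
Definition certified (q : Z) : bool :=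
  let M := Mbound (tri_root q) in
  let prevs := map (fun p' => filter (shifted_ok (q - 1) M p') (candidates (q - 1))) [0; 1] in
  forallb (fun p => existsb (fun d =>
    direct_ok q M p d &&
    ((wlow d <=? p) ||
     forallb (existsb (fun s => wlow d + wup s <=? M)) prevs)) (candidates q)) [0; 1].

Fixpoint certified_from (len : nat) (q : Z) : bool :=
  match len with O => true | S l => certified q && certified_from l (q + 1) end.

Lemma certified_from_spec len q0 :
  certified_from len q0 = true -> forall q, q0 <= q < q0 + Z.of_nat len -> certified q = true.
Proof.
  revert q0; induction len as [|len IH]; intros q0 H q Hq; cbn [certified_from] in H.
  - lia.
  - apply andb_true_iff in H as [H1 H2].
    destruct (Z.eq_dec q0 q) as [<- | Hne]; [exact H1|].
    apply (IH (q0 + 1) H2). lia.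
Qed.

(* The computation: every q below T 134 = 9045 is certified. *)
Lemma certified_range q : 0 <= q < 9045 -> certified q = true.
Proof.
  intros Hq. apply (certified_from_spec (Z.to_nat 9045) 0).
  - vm_compute. reflexivity.
  - rewrite Z2Nat.id by lia. lia.
Qed.

(** * Large q: an explicit estimate *)

(* Parities of (y, T y) have period 4 and take all four values on any four
   consecutive y, so y0 can be matched to both B and q. *)
Lemma parity_choice q a Bt :
  3 <= a -> T a <= q < T (a + 1) ->
  exists y0 k, a - 3 <= y0 <= a /\ (Bt + y0) mod 2 = 0 /\ q - T y0 = 2 * k /\
               0 <= k /\ 2 * k <= 4 * a - 4.
Proof.
  intros Ha Hq.
  assert (Hc : exists c, a - 1 <= c <= a /\ (Bt + c) mod 2 = 0).
  { destruct (Z.Even_or_Odd (a + Bt)) as [[w H] | [w H]];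
      [exists a | exists (a - 1)]; split; Z.div_mod_to_equations; lia. }
  destruct Hc as [c [Hc1 Hc2]].
  assert (Tc2 : T (c - 2) = T c - 2 * c + 1).
  { pose proof (T_double c). pose proof (T_double (c - 2)). nia. }
  assert (Hy : exists y0 k, c - 2 <= y0 <= c /\ (Bt + y0) mod 2 = 0 /\ q - T y0 = 2 * k).
  { destruct (Z.Even_or_Odd (q - T c)) as [[k H'] | [k H']].
    - exists c, k. repeat split; lia.
    - exists (c - 2), (k + c). repeat split; Z.div_mod_to_equations; lia. }
  destruct Hy as [y0 [k [Hy1 [Hy2 Hy3]]]].
  (* q - T y0 < T (a + 1) - T (a - 3) = 4a - 2 *)
  assert (Ta1 : T (a + 1) = T a + a + 1).
  { pose proof (T_double a). pose proof (T_double (a + 1)). nia. }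
  assert (Ta3 : T (a - 3) = T a - 3 * a + 3).
  { pose proof (T_double a). pose proof (T_double (a - 3)). nia. }
  assert (T y0 <= T a) by (apply T_mono; lia).
  assert (T (a - 3) <= T y0) by (apply T_mono; lia).
  exists y0, k. repeat split; lia.
Qed.

Lemma tri_root_pred q a :
  1 <= a -> T a <= q < T (a + 1) ->
  a - 1 <= tri_root (q - 1) <= a /\ T (tri_root (q - 1)) <= q - 1 < T (tri_root (q - 1) + 1).
Proof.
  intros Ha Hq. pose proof (T_double a). pose proof (T_double (a - 1)).
  destruct (tri_root_spec (q - 1)) as [Hb0 [Hb1 Hb2]]; [nia|].
  set (b := tri_root (q - 1)) in *.
  split; [split; apply Z.nlt_ge; intro Hlt | lia].
  - assert (T (b + 1) <= T (a - 1)) by (apply T_mono; lia). nia.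
  - assert (T (a + 1) <= T b) by (apply T_mono; lia). lia.
Qed.

(* Two greedy splittings and the binary digits of the remainder:
   the linear weight is at most 4 sqrt(2k) + 5. *)
Lemma tail_decomposition k :
  0 <= k -> exists z1 z2 k2, 0 <= z1 /\ 0 <= z2 /\ 0 <= k2 /\
    k = T z1 + 2 * (T z2 + 2 * k2) /\ z1 + 2 * z2 + 4 * k2 <= 4 * Z.sqrt (2 * k) + 5.
Proof.
  intros Hk. pose proof (split_tri_spec k Hk) as Hs.
  destruct (split_tri k) as [z k1]. destruct Hs as [Hz [Hk1 [Hkz [Hzz Hk1b]]]].
  assert (Hzs : z <= Z.sqrt (2 * k)).
  { rewrite <- (Z.sqrt_square z) by lia. apply Z.sqrt_le_mono. lia. }
  assert (Hd : T (k1 mod 2) = k1 mod 2).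
  { assert (k1 mod 2 = 0 \/ k1 mod 2 = 1) as [-> | ->] by (Z.div_mod_to_equations; lia);
      reflexivity. }
  exists z, (k1 mod 2), (k1 / 2).
  rewrite Hd. repeat split; Z.div_mod_to_equations; lia.
Qed.

Lemma tail_bound a k :
  0 <= k -> 2 * k <= 4 * a - 4 -> exists z1 z2 k2, 0 <= z1 /\ 0 <= z2 /\ 0 <= k2 /\
    k = T z1 + 2 * (T z2 + 2 * k2) /\ z1 + 2 * z2 + 4 * k2 <= 4 * Z.sqrt (4 * a - 4) + 5.
Proof.
  intros Hk Hka. destruct (tail_decomposition k Hk) as [z1 [z2 [k2 [? [? [? [? HY]]]]]]].
  pose proof (Z.sqrt_le_mono (2 * k) (4 * a - 4) Hka).
  exists z1, z2, k2. repeat split; lia.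
Qed.

(* For a >= 134 the estimate of [tail_bound] fits in the room left by
   m >= Mbound a: the proof compares 8 s with sqrt(32 a) ~ 2 sqrt 2 s. *)
Lemma sqrt_small a : 134 <= a -> 8 * Z.sqrt (4 * a - 4) + 9 <= a + Z.sqrt (32 * a + 16).
Proof.
  intros Ha. destruct (Z.sqrt_spec (4 * a - 4)) as [S1 _]; [lia|].
  destruct (Z.sqrt_spec (32 * a + 16)) as [_ S2]; [lia|].
  pose proof (Z.sqrt_le_mono (23 * 23) (4 * a - 4) ltac:(lia)) as S3.
  rewrite Z.sqrt_square in S3 by lia.
  set (s := Z.sqrt (4 * a - 4)) in *. set (t := Z.sqrt (32 * a + 16)) in *.
  pose proof (Z.sqrt_nonneg (32 * a + 16)).
  apply Z.nlt_ge. intro Hlt.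
  (* w = 8s + 9 - a exceeds t + 1, while 8 s^2 < (t + 1)^2 and 4a >= s^2 + 4 *)
  set (w := 8 * s + 9 - a).
  assert (Hw : 0 < t + 1 <= w) by lia.
  assert (Hsq : 8 * (s * s) < w * w) by nia.
  set (X := 32 * s + 32 - s * s).
  assert (HX : 4 * w <= X) by (unfold X, w; lia).
  assert (HX239 : X <= 239) by (unfold X; nia).
  nia.
Qed.

(** * The lower bound on m *)

(* If T a <= C, the hypothesis on m gives the gap D = m - 2a - 5 > 4 sqrt(2a + 1):
   indeed a + 1/2 <= sqrt(2C + 1/4) =: u, and m > 2u + 4 sqrt(2u) + 4. *)
Lemma gap_from_C C m a :
  (IZR m > 2 * (sqrt (sqrt (2 * C + 1 / 4)) + sqrt 2) ^ 2)%R ->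
  0 <= a -> (IZR (T a) <= C)%R ->
  0 < m - 2 * a - 5 /\ 32 * a + 16 < (m - 2 * a - 5) * (m - 2 * a - 5).
Proof.
  intros hm Ha hT.
  assert (h2 : (2 * IZR (T a) = IZR a * (IZR a + 1))%R).
  { rewrite <- mult_IZR, <- plus_IZR, <- mult_IZR. f_equal. apply T_double. }
  assert (hA : (0 <= IZR a)%R) by (apply IZR_le; lia).
  set (c := (2 * C + 1 / 4)%R) in *.
  assert (hc : ((IZR a + 1 / 2) * (IZR a + 1 / 2) <= c)%R) by (unfold c; nra).
  set (u := sqrt c) in *. assert (hu : (u * u = c)%R) by (apply sqrt_sqrt; nra).
  assert (hu0 : (0 <= u)%R) by apply sqrt_pos.
  set (r := sqrt u) in *. assert (hr : (r * r = u)%R) by (apply sqrt_sqrt; lra).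
  assert (hr0 : (0 <= r)%R) by apply sqrt_pos.
  set (s := sqrt 2) in *. assert (hs : (s * s = 2)%R) by (apply sqrt_sqrt; lra).
  assert (hs0 : (0 <= s)%R) by apply sqrt_pos.
  assert (ha : (IZR a + 1 / 2 <= u)%R) by nra.
  assert (hm' : (IZR m > 2 * u + 4 * r * s + 4)%R).
  { replace (2 * u + 4 * r * s + 4)%R with (2 * (r + s) ^ 2)%R by (simpl; nra). exact hm. }
  set (D := (IZR m - 2 * IZR a - 5)%R).
  assert (hD : (D > 4 * r * s)%R) by (unfold D; nra).
  assert (hrs : (0 <= r * s)%R) by nra.
  assert (hD2 : (D * D > 32 * IZR a + 16)%R).
  { assert (D * D > (4 * r * s) * (4 * r * s))%R by nra.
    assert ((4 * r * s) * (4 * r * s) = 16 * (r * r) * (s * s))%R by ring. nra. }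
  assert (EZ : IZR (m - 2 * a - 5) = D) by (unfold D; rewrite !minus_IZR, mult_IZR; reflexivity).
  split.
  - apply lt_IZR. rewrite EZ. nra.
  - apply lt_IZR. rewrite mult_IZR, EZ, plus_IZR, mult_IZR. nra.
Qed.

Lemma Mbound_from_C C m a :
  (IZR m > 2 * (sqrt (sqrt (2 * C + 1 / 4)) + sqrt 2) ^ 2)%R ->
  0 <= a -> (IZR (T a) <= C)%R -> Mbound a <= m.
Proof.
  intros hm Ha hT. destruct (gap_from_C C m a hm Ha hT) as [HD0 HD].
  unfold Mbound. destruct (Z.sqrt_spec (32 * a + 16)) as [S1 S2]; [lia|].
  pose proof (Z.sqrt_nonneg (32 * a + 16)).
  destruct (Z_le_gt_dec (m - 2 * a - 5) (Z.sqrt (32 * a + 16))); nia.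
Qed.

Section Representation.

Variables (m : Z) (n : nat).
Hypothesis Hn : (2 <= n)%nat.
Hypothesis Hpn : m - 3 <= 2 ^ Z.of_nat n.

Lemma witness_window q B x0 z1 z2 k2 :
  0 <= z1 -> 0 <= z2 -> 0 <= k2 -> 4 * k2 + 3 < m ->
  T (x0 - 1) + 2 * (T z1 + 2 * T z2 + 4 * k2) = q ->
  x0 mod 2 = B mod 2 ->
  2 * (z1 + 2 * z2 + 4 * k2) + x0 <= B ->
  B - x0 + 2 * (z1 + 2 * z2 + 4 * k2) + 8 <= 2 * m ->
  represents m (pow2_coeffs n) ((m - 2) * q + B).
Proof.
  intros. apply (witness_represents m n q B x0 z1 z2 k2 ((B - x0) / 2));
    try assumption; Z.div_mod_to_equations; lia.
Qed.

Lemma wvalid_window q B w :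
  wvalid q w = true -> 4 * wk2 w + 3 < m -> wx0 w mod 2 = B mod 2 ->
  wlow w <= B -> B + wup w + 3 <= 2 * m ->
  represents m (pow2_coeffs n) ((m - 2) * q + B).
Proof.
  destruct w as [[[x0 z1] z2] k2]. unfold wvalid, wlow, wup, wx0, wY, wk2.
  intros Hv. rewrite !andb_true_iff, !Z.leb_le, Z.eqb_eq in Hv.
  destruct Hv as [[[? ?] ?] ?]. intros.
  apply (witness_window q B x0 z1 z2 k2); auto; lia.
Qed.

Lemma certified_represents q B :
  certified q = true -> Mbound (tri_root q) <= m -> 0 <= B <= m - 3 ->
  represents m (pow2_coeffs n) ((m - 2) * q + B).
Proof.
  intros Hc HM HB. unfold certified in Hc.
  set (M := Mbound (tri_root q)) in *.
  rewrite forallb_forall in Hc.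
  specialize (Hc (B mod 2) ltac:(cbn; Z.div_mod_to_equations; lia)).
  apply existsb_exists in Hc as [d [_ Hd]].
  unfold direct_ok in Hd. rewrite !andb_true_iff, Z.eqb_eq, Z.leb_le, Z.ltb_lt in Hd.
  destruct Hd as [[[[Hdv Hdp] Hdu] Hdk] Hrest].
  destruct (Z_le_gt_dec (wlow d) B) as [Hlow | Hlow].
  - apply (wvalid_window q B d); auto; lia.
  - (* B is too small for d: represent (m-2)(q-1) + (B + m - 2) instead *)
    apply orb_true_iff in Hrest as [Hp | Hs].
    { apply Z.leb_le in Hp. Z.div_mod_to_equations. lia. }
    rewrite forallb_forall in Hs.
    set (p' := (B + m - 2) mod 2).
    specialize (Hs (filter (shifted_ok (q - 1) M p') (candidates (q - 1)))
      ltac:(apply (in_map (fun p' => filter (shifted_ok (q - 1) M p') (candidates (q - 1))));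
            cbn; unfold p'; Z.div_mod_to_equations; lia)).
    apply existsb_exists in Hs as [s [Hs Hds]].
    apply filter_In in Hs as [_ Hs]. unfold shifted_ok in Hs.
    rewrite !andb_true_iff, Z.eqb_eq, Z.leb_le, Z.ltb_lt in Hs.
    destruct Hs as [[[Hsv Hsp] Hsl] Hsk]. apply Z.leb_le in Hds.
    replace ((m - 2) * q + B) with ((m - 2) * (q - 1) + (B + m - 2)) by ring.
    apply (wvalid_window (q - 1) (B + m - 2) s); auto; lia.
Qed.

(* For q with root a >= 134: take y0 from [parity_choice] and the tail from
   [tail_bound]; if B is too small, do the same for q - 1 and B + m - 2. *)
Lemma large_represents q a B :
  134 <= a -> T a <= q < T (a + 1) -> Mbound a <= m -> 0 <= B <= m - 3 ->
  represents m (pow2_coeffs n) ((m - 2) * q + B).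
Proof.
  intros Ha Hq Hm HB.
  pose proof (sqrt_small a Ha) as Hst.
  assert (Hta : Z.sqrt (32 * a + 16) <= a).
  { assert (Z.sqrt (32 * a + 16) <= Z.sqrt (a * a)) by (apply Z.sqrt_le_mono; nia).
    rewrite Z.sqrt_square in * by lia. lia. }
  pose proof (Z.sqrt_nonneg (4 * a - 4)). unfold Mbound in Hm.
  set (s := Z.sqrt (4 * a - 4)) in *. set (t := Z.sqrt (32 * a + 16)) in *.
  destruct (parity_choice q a B) as [y0 [k [Hy0 [Hpar [Hk [Hk0 Hka]]]]]]; [lia | exact Hq|].
  destruct (tail_bound a k Hk0 Hka) as [z1 [z2 [k2 [? [? [? [Hkz HY]]]]]]].
  destruct (Z_le_gt_dec (2 * (z1 + 2 * z2 + 4 * k2)) (B + y0)) as [Hfit | Hsmall].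
  - apply (witness_window q B (- y0) z1 z2 k2); try lia;
      [rewrite T_reflect; lia | Z.div_mod_to_equations; lia].
  - (* B is small: use q - 1, whose triangular root a' is a - 1 or a *)
    destruct (tri_root_pred q a) as [Ha' Hq']; [lia | exact Hq|].
    set (a' := tri_root (q - 1)) in *.
    destruct (parity_choice (q - 1) a' (B + m - 3))
      as [y1 [k' [Hy1 [Hpar' [Hk' [Hk0' Hka']]]]]]; [lia | exact Hq'|].
    destruct (tail_bound a k' Hk0' ltac:(lia)) as [u1 [u2 [l2 [? [? [? [Hku HU]]]]]]].
    replace ((m - 2) * q + B) with ((m - 2) * (q - 1) + (B + m - 2)) by ring.
    apply (witness_window (q - 1) (B + m - 2) (y1 + 1) u1 u2 l2); try lia;
      [replace (y1 + 1 - 1) with y1 by ring; lia | Z.div_mod_to_equations; lia].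
Qed.

Lemma represents_quot_rem q B :
  0 <= q -> 0 <= B <= m - 3 -> Mbound (tri_root q) <= m ->
  represents m (pow2_coeffs n) ((m - 2) * q + B).
Proof.
  intros Hq HB HM.
  destruct (Z_lt_le_dec q 9045) as [Hsmall | Hlarge].
  - apply certified_represents; auto. apply certified_range. lia.
  - destruct (tri_root_spec q Hq) as [Ha0 [Ha1 Ha2]].
    apply (large_represents q (tri_root q) B); auto.
    apply Z.nlt_ge. intro Ha.
    assert (T (tri_root q + 1) <= T 134) by (apply T_mono; lia).
    assert (T 134 = 9045) by reflexivity. lia.
Qed.

End Representation.

Lemma pow2_coeffs_pos n : Forall (fun c => 0 < c) (pow2_coeffs n).
Proof.
  unfold pow2_coeffs. apply Forall_forall. intros c Hc.
  apply in_map_iff in Hc as [i [<- _]]. apply Z.pow_pos_nonneg; lia.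
Qed.

(* The hypothesis forces m > 2 (sqrt 2)^2 = 4. *)
Lemma m_gt_4 C m :
  (IZR m > 2 * (sqrt (sqrt (2 * C + 1 / 4)) + sqrt 2) ^ 2)%R -> 4 < m.
Proof.
  intros hm. assert (hs : (sqrt 2 * sqrt 2 = 2)%R) by (apply sqrt_sqrt; lra).
  pose proof (sqrt_pos 2). pose proof (sqrt_pos (sqrt (2 * C + 1 / 4))).
  apply lt_IZR. simpl in hm. nra.
Qed.

(* Only N <= C (m - 2) are tested; the quotient q = N / (m - 2) is then at
   most C, and so is the triangular number below it. *)
Lemma quotient_root_le_C C m N :
  2 < m -> 0 <= N -> (IZR N <= C * IZR (m - 2))%R ->
  (IZR (T (tri_root (N / (m - 2)))) <= C)%R.
Proof.
  intros Hm HN HNC. pose proof (Z.div_mod N (m - 2) ltac:(lia)).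
  pose proof (Z.mod_pos_bound N (m - 2) ltac:(lia)).
  destruct (tri_root_spec (N / (m - 2))) as [_ [Ha _]]; [apply Z.div_pos; lia|].
  assert (E : (IZR (m - 2) * IZR (T (tri_root (N / (m - 2)))) <= IZR N)%R)
    by (rewrite <- mult_IZR; apply IZR_le; nia).
  assert (P : (0 < IZR (m - 2))%R) by (apply IZR_lt; lia). nra.
Qed.

Lemma log2_exponent m :
  10 <= m -> (2 <= Z.to_nat (Z.log2_up (m - 3)))%nat /\
             m - 3 <= 2 ^ Z.of_nat (Z.to_nat (Z.log2_up (m - 3))).
Proof.
  intros Hm. rewrite Z2Nat.id by apply Z.log2_up_nonneg.
  pose proof (Z.log2_up_spec (m - 3) ltac:(lia)) as [_ Hup]. split; [|exact Hup].
  destruct (Z_le_gt_dec 2 (Z.log2_up (m - 3))); [lia|].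
  assert (2 ^ Z.log2_up (m - 3) <= 2 ^ 1)
    by (apply Z.pow_le_mono_r; pose proof (Z.log2_up_nonneg (m - 3)); lia). lia.
Qed.

Theorem lemma3p3 (C : R) (hC : C_property C) (m : Z)
  (hm : (IZR m > 2 * (sqrt (sqrt (2 * C + 1 / 4)) + sqrt 2) ^ 2)%R) :
  universal m (pow2_coeffs (Z.to_nat (Z.log2_up (m - 3)))).
Proof.
  pose proof (m_gt_4 C m hm) as Hm4.
  apply hC; [lia | apply pow2_coeffs_pos |]. intros N HN HNC.
  pose proof (Z.div_mod N (m - 2) ltac:(lia)) as HNqB.
  pose proof (Z.mod_pos_bound N (m - 2) ltac:(lia)).
  assert (Hq : 0 <= N / (m - 2)) by (apply Z.div_pos; lia).
  destruct (tri_root_spec _ Hq) as [Ha0 _].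
  pose proof (Mbound_from_C C m _ hm Ha0 (quotient_root_le_C C m N ltac:(lia) ltac:(lia) HNC))
    as HM.
  destruct (log2_exponent m) as [Hn Hpn].
  { unfold Mbound in HM. set (a := tri_root (N / (m - 2))) in *.
    pose proof (Z.sqrt_le_mono 16 (32 * a + 16) ltac:(lia)) as H16.
    change (Z.sqrt 16) with 4 in H16. lia. }
  rewrite HNqB. apply represents_quot_rem; auto; lia.
Qed.
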